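(* Let $A_1\in\mathbb R^{n_1\times n_1}$, $A_2\in\mathbb R^{n_2\times n_2}$ be symmetric positive definite with spectra contained in $[\alpha_1,\beta_1]$ and $[\alpha_2,\beta_2]$ respectively ($0<\alpha_i\le\beta_i$), let $B\in\mathbb R^{n_1\times n_2}$, let $\epsilon>0$ and set $\kappa:=\frac{\beta_1+\beta_2}{\alpha_1+\alpha_2}$, assuming $\kappa\epsilon<1$. Let $A_i^{(h)}$, $h=0,\dots,\ell$, be the level-$h$ block-diagonal parts of $A_i$ (see context). Suppose matrices $\widetilde X^{(\ell)}$ and $\delta\widetilde X^{(h)}$, $h=\ell-1,\dots,0$, of size $n_1\times n_2$ are given, and define $$R^{(\ell)}:=A_1^{(\ell)}\widetilde X^{(\ell)}+\widetilde X^{(\ell)}A_2^{(\ell)}-B,$$ and, for $h=\ell-1,\dots,0$, with $\widetilde X^{(h+1)}:=\widetilde X^{(\ell)}+\delta\widetilde X^{(\ell-1)}+\dots+\delta\widetilde X^{(h+1)}$, $$\widetilde\Xi^{(h)}:=-(A_1^{(h)}-A_1^{(h+1)})\widetilde X^{(h+1)}-\widetilde X^{(h+1)}(A_2^{(h)}-A_2^{(h+1)}),\qquad R^{(h)}:=A_1^{(h)}\delta\widetilde X^{(h)}+\delta\widetilde X^{(h)}A_2^{(h)}-\widetilde\Xi^{(h)}.$$ Assume $\|R^{(\ell)}\|_F\le\epsilon\|B\|_F$ and $\|R^{(h)}\|_F\le\epsilon\|\widetilde\Xi^{(h)}\|_F$ for $h<\ell$. Then for every $h=0,\dots,\ell$,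 the matrix $\widetilde X^{(h)}:=\widetilde X^{(\ell)}+\delta\widetilde X^{(\ell-1)}+\dots+\delta\widetilde X^{(h)}$ satisfies $$A_1^{(h)}\widetilde X^{(h)}+\widetilde X^{(h)}A_2^{(h)}=B+R^{(\ell)}+\dots+R^{(h)},$$ and $$\|R^{(h)}\|_F\le\kappa\epsilon(1+\epsilon)(1+\kappa\epsilon)^{\ell-h-1}\|B\|_F.$$
   Context: For $i=1,2$, fix a sequence of nested partitions of $\{1,\dots,n_i\}$ into sets of contiguous indices at levels $h=0,1,\dots,\ell$: level $0$ is the trivial partition $\{1,\dots,n_i\}$, and each set at level $h+1$ is obtained by splitting a set of level $h$ into two contiguous parts (one of which may be empty). $A_i^{(h)}$ denotes the block-diagonal matrix obtained from $A_i$ by keeping the entries whose row and column indices lie in the same set of the level-$h$ partition and setting all other entries to zero; in particular $A_i^{(0)}=A_i$, and $A_i^{(h)}-A_i^{(h+1)}$ consists of the off-diagonal blocks uncovered at level $h+1$. $\|\cdot\|_F$ is the Frobenius norm. *)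

From HB Require Import structures.
From mathcomp Require Import all_boot all_order all_algebra.
Set Implicit Arguments. Unset Strict Implicit. Unset Printing Implicit Defensive.
Import Order.TTheory GRing.Theory Num.Theory.
Local Open Scope ring_scope.

Definition frob (R : rcfType) m n (M : 'M[R]_(m, n)) : R :=
  Num.sqrt (\sum_(i < m) \sum_(j < n) M i j ^+ 2).

Definition symmetric_mx (R : rcfType) n (A : 'M[R]_n) : Prop := A^T = A.

Definition posdef_mx (R : rcfType) n (A : 'M[R]_n) : Prop :=
  forall v : 'rV[R]_n, v != 0 -> 0 < (v *m A *m v^T) 0 0.

Definition spectrum_in (R : rcfType) n (A : 'M[R]_n) (a b : R) : Prop :=
  forall l : R, eigenvalue A l -> a <= l <= b.

(* A hierarchy of partitions of {0,..,n-1} at levels 0..ell, given by block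
   labels: at level h, indices i and j lie in the same set iff
   lab h i = lab h j.  Conditions:
   - each level-h partition consists of contiguous sets (labels nondecreasing);
   - level 0 is the trivial partition;
   - each set at level h+1 is contained in a set at level h, and each set at
     level h is split into (at most) two sets at level h+1 (one may be empty). *)
Definition nested_partitions n (ell : nat) (lab : nat -> 'I_n -> nat) : Prop :=
  [/\ forall h, h <= ell -> forall i j : 'I_n, (i <= j)%N -> (lab h i <= lab h j)%N,
      forall i j : 'I_n, lab 0%N i = lab 0%N j,
      forall h, h < ell -> forall i j : 'I_n,
          lab h.+1 i = lab h.+1 j -> lab h i = lab h j
    & forall h, h < ell -> forall i j k : 'I_n,
          lab h i = lab h j -> lab h j = lab h k ->
          [\/ lab h.+1 i = lab h.+1 j, lab h.+1 j = lab h.+1 k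
            | lab h.+1 i = lab h.+1 k]]%N.

Definition bdiag (R : rcfType) n (lab : nat -> 'I_n -> nat) (h : nat)
    (A : 'M[R]_n) : 'M[R]_n :=
  \matrix_(i, j) if lab h i == lab h j then A i j else 0.

Definition Xtil (R : rcfType) n1 n2 (ell : nat) (Xl : 'M[R]_(n1, n2))
    (dX : nat -> 'M[R]_(n1, n2)) (h : nat) : 'M[R]_(n1, n2) :=
  Xl + \sum_(h <= k < ell) dX k.

Definition Xitil (R : rcfType) n1 n2 (lab1 : nat -> 'I_n1 -> nat)
    (lab2 : nat -> 'I_n2 -> nat) (A1 : 'M[R]_n1) (A2 : 'M[R]_n2) (ell : nat)
    (Xl : 'M[R]_(n1, n2)) (dX : nat -> 'M[R]_(n1, n2)) (h : nat) : 'M[R]_(n1, n2) :=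
  - ((bdiag lab1 h A1 - bdiag lab1 h.+1 A1) *m Xtil ell Xl dX h.+1)
  - Xtil ell Xl dX h.+1 *m (bdiag lab2 h A2 - bdiag lab2 h.+1 A2).

Definition Resid (R : rcfType) n1 n2 (lab1 : nat -> 'I_n1 -> nat)
    (lab2 : nat -> 'I_n2 -> nat) (A1 : 'M[R]_n1) (A2 : 'M[R]_n2)
    (B : 'M[R]_(n1, n2)) (ell : nat)
    (Xl : 'M[R]_(n1, n2)) (dX : nat -> 'M[R]_(n1, n2)) (h : nat) : 'M[R]_(n1, n2) :=
  if h == ell then
    bdiag lab1 ell A1 *m Xl + Xl *m bdiag lab2 ell A2 - B
  else
    bdiag lab1 h A1 *m dX h + dX h *m bdiag lab2 h A2
    - Xitil lab1 lab2 A1 A2 ell Xl dX h.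

From HB Require Import structures.
From mathcomp Require Import all_boot all_order all_algebra.
From mathcomp Require Import ring lra zify complex.
Import Order.TTheory GRing.Theory Num.Theory.
Local Open Scope ring_scope.
Set Implicit Arguments. Unset Strict Implicit.

(* Write [L_h X := A_1^(h) X + X A_2^(h)].  The identity telescopes because
   [Xi^(h) = L_(h+1) X^(h+1) - L_h X^(h+1)].  For the bound, each block-diagonal
   part [A_i^(h)] of [A_i] is symmetric with numerical range in [[alpha_i, beta_i]],
   so [|L_(h+1) X| >= (alpha_1 + alpha_2) |X|], while the off-diagonal
   parts [A_i^(h) - A_i^(h+1)] have numerical range in [[-beta_i, beta_i]], hence
   norm at most [beta_i].  This gives
   [|Xi^(h)| <= kappa |L_(h+1) X^(h+1)| <= kappa (|B| + sum_(k > h) |R^(k)|)],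
   and a discrete Gronwall argument turns it into the geometric bound. *)

Section FrobeniusDot.
Variable R : rcfType.

Definition frobdot m n (M N : 'M[R]_(m, n)) : R := \sum_i \sum_j M i j * N i j.

Lemma frobE m n (M : 'M[R]_(m, n)) : frob M = Num.sqrt (frobdot M M).
Proof. by congr (Num.sqrt _); do 2 (apply: eq_bigr => ? _); rewrite expr2. Qed.

Lemma frobdotC m n (M N : 'M[R]_(m, n)) : frobdot M N = frobdot N M.
Proof. by do 2 (apply: eq_bigr => ? _); rewrite mulrC. Qed.

Lemma frobdotDl m n (M N P : 'M[R]_(m, n)) :
  frobdot (M + N) P = frobdot M P + frobdot N P.
Proof.
rewrite /frobdot -big_split; apply: eq_bigr => i _; rewrite -big_split.
by apply: eq_bigr => j _; rewrite !mxE mulrDl.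
Qed.

Lemma frobdotZl m n a (M P : 'M[R]_(m, n)) : frobdot (a *: M) P = a * frobdot M P.
Proof.
rewrite /frobdot mulr_sumr; apply: eq_bigr => i _; rewrite mulr_sumr.
by apply: eq_bigr => j _; rewrite !mxE mulrA.
Qed.

Lemma frobdotNl m n (M P : 'M[R]_(m, n)) : frobdot (- M) P = - frobdot M P.
Proof. by rewrite -scaleN1r frobdotZl mulN1r. Qed.

Lemma frobdotDr m n (M N P : 'M[R]_(m, n)) :
  frobdot P (M + N) = frobdot P M + frobdot P N.
Proof. by rewrite frobdotC frobdotDl !(frobdotC P). Qed.

Lemma frobdotZr m n a (M P : 'M[R]_(m, n)) : frobdot P (a *: M) = a * frobdot P M.
Proof. by rewrite frobdotC frobdotZl frobdotC. Qed.

Lemma frobdotNr m n (M P : 'M[R]_(m, n)) : frobdot P (- M) = - frobdot P M.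
Proof. by rewrite frobdotC frobdotNl frobdotC. Qed.

Definition frobdotE :=
  (frobdotDl, frobdotDr, frobdotNl, frobdotNr, frobdotZl, frobdotZr).

Lemma frobdot0l m n (M : 'M[R]_(m, n)) : frobdot 0 M = 0.
Proof. by rewrite /frobdot big1 // => i _; rewrite big1 // => j _; rewrite mxE mul0r. Qed.

Lemma frobdot_ge0 m n (M : 'M[R]_(m, n)) : 0 <= frobdot M M.
Proof. by do 2 (apply: sumr_ge0 => ? _); rewrite -expr2 sqr_ge0. Qed.

Lemma frobdot_eq0 m n (M : 'M[R]_(m, n)) : (frobdot M M == 0) = (M == 0).
Proof.
apply/idP/eqP => [|->]; last by rewrite frobdot0l.
rewrite psumr_eq0 => [/allP M0|i _]; last first.
  by apply: sumr_ge0 => j _; rewrite -expr2 sqr_ge0.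
apply/matrixP => i j; move: (M0 i (mem_index_enum _)).
rewrite psumr_eq0 => [/allP/(_ j (mem_index_enum _))|k _]; last by rewrite -expr2 sqr_ge0.
by rewrite -expr2 sqrf_eq0 mxE => /eqP.
Qed.

Lemma frobdot_tr m n (M N : 'M[R]_(m, n)) : frobdot M^T N^T = frobdot M N.
Proof. by rewrite /frobdot exchange_big; do 2 (apply: eq_bigr => ? _); rewrite !mxE. Qed.

Lemma frobdot_trace m n (M N : 'M[R]_(m, n)) : frobdot M N = \tr (M *m N^T).
Proof. by apply: eq_bigr => i _; rewrite mxE; apply: eq_bigr => j _; rewrite mxE. Qed.

Lemma frobdot_mulmxl m n p (X : 'M[R]_(m, n)) (D : 'M[R]_(n, p)) Y :
  frobdot (X *m D) Y = frobdot X (Y *m D^T).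
Proof. by rewrite !frobdot_trace trmx_mul trmxK mulmxA. Qed.

Lemma frobdot_rows m n (X Y : 'M[R]_(m, n)) :
  frobdot X Y = \sum_i frobdot (row i X) (row i Y).
Proof.
by apply: eq_bigr => i _; rewrite /frobdot big_ord1; apply: eq_bigr => j _; rewrite !mxE.
Qed.

Lemma frobdot_rV n (u v : 'rV[R]_n) : frobdot u v = (u *m v^T) 0 0.
Proof. by rewrite /frobdot big_ord1 mxE; apply: eq_bigr => j _; rewrite mxE. Qed.

Lemma frobdot_rVE n (u w : 'rV[R]_n) : frobdot u w = \sum_k u 0 k * w 0 k.
Proof. by rewrite /frobdot big_ord1. Qed.

Lemma frob_ge0 m n (M : 'M[R]_(m, n)) : 0 <= frob M.
Proof. by rewrite frobE sqrtr_ge0. Qed.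

Lemma sqr_frob m n (M : 'M[R]_(m, n)) : frob M ^+ 2 = frobdot M M.
Proof. by rewrite frobE sqr_sqrtr // frobdot_ge0. Qed.

Lemma frob0 m n : frob (0 : 'M[R]_(m, n)) = 0.
Proof. by rewrite frobE frobdot0l sqrtr0. Qed.

Lemma frobN m n (M : 'M[R]_(m, n)) : frob (- M) = frob M.
Proof. by rewrite !frobE frobdotNl frobdotNr opprK. Qed.

Lemma frob_tr m n (M : 'M[R]_(m, n)) : frob M^T = frob M.
Proof. by rewrite !frobE frobdot_tr. Qed.

Lemma frobdot_CauchySchwarz m n (M N : 'M[R]_(m, n)) :
  frobdot M N <= frob M * frob N.
Proof.
have [->|N0] := eqVneq N 0.
  by rewrite frob0 mulr0 frobdotC frobdot0l.
have NN_gt0 : 0 < frobdot N N by rewrite lt_def frobdot_eq0 N0 frobdot_ge0.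
(* expand [0 <= |M - t N|^2] at the minimising [t] *)
have sqr_le : frobdot M N ^+ 2 <= frobdot M M * frobdot N N.
  pose t := frobdot M N / frobdot N N.
  have := frobdot_ge0 (M - t *: N); rewrite !frobdotE (frobdotC N M).
  have -> : frobdot M M - t * frobdot M N
             + (- (t * frobdot M N) - t * - (t * frobdot N N))
           = frobdot M M - frobdot M N ^+ 2 / frobdot N N.
    by rewrite /t; field; rewrite gt_eqF.
  by rewrite subr_ge0 ler_pdivrMr.
apply: le_trans (ler_norm _) _; rewrite -sqrtr_sqr !frobE -sqrtrM ?frobdot_ge0 //.
by rewrite ler_sqrt // mulr_ge0 ?frobdot_ge0.
Qed.

Lemma ler_frobD m n (M N : 'M[R]_(m, n)) : frob (M + N) <= frob M + frob N.
Proof.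
rewrite [frob (M + N)]frobE -[frob M + frob N]ger0_norm ?addr_ge0 ?frob_ge0 //.
rewrite -sqrtr_sqr ler_sqrt ?sqr_ge0 // !frobdotE (frobdotC N M) sqrrD !sqr_frob.
by have := frobdot_CauchySchwarz M N; lra.
Qed.

Lemma ler_frob_sum m n I (r : seq I) (P : pred I) (F : I -> 'M[R]_(m, n)) :
  frob (\sum_(i <- r | P i) F i) <= \sum_(i <- r | P i) frob (F i).
Proof.
apply: (big_ind2 (fun M x => frob M <= x)) => [|M1 x1 M2 x2 le1 le2|//].
  by rewrite frob0.
exact: le_trans (ler_frobD _ _) (lerD le1 le2).
Qed.

End FrobeniusDot.

Section NumericalRange.
Variable R : rcfType.

Definition qform n (A : 'M[R]_n) (v : 'rV[R]_n) : R := frobdot (v *m A) v.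

Lemma qformE n (A : 'M[R]_n) (u : 'rV[R]_n) :
  qform A u = \sum_k \sum_j u 0 k * A k j * u 0 j.
Proof.
rewrite /qform frobdot_rVE exchange_big; apply: eq_bigr => j _.
by rewrite mxE mulr_suml.
Qed.

Definition numrange_in n (A : 'M[R]_n) (a b : R) : Prop :=
  forall v : 'rV[R]_n, a * frobdot v v <= qform A v <= b * frobdot v v.

Lemma numrange_inB n (A C : 'M[R]_n) a b c d :
  numrange_in A a b -> numrange_in C c d -> numrange_in (A - C) (a - d) (b - c).
Proof.
move=> rA rC v; have /andP[] := rA v; have /andP[] := rC v.
by rewrite /qform mulmxBr frobdotDl frobdotNl !mulrBl => *; apply/andP; split; lra.
Qed.

Lemma numrange_in_widen n (A : 'M[R]_n) a b a' b' :
  a' <= a -> b <= b' -> numrange_in A a b -> numrange_in A a' b'.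
Proof.
move=> le_a le_b rA v; have /andP[lo hi] := rA v; have := frobdot_ge0 v.
by move=> v_ge0; apply/andP; split; nra.
Qed.

Lemma frobdot_mulmx_ge m n (X : 'M[R]_(m, n)) (A : 'M[R]_n) a b :
  numrange_in A a b -> a * frobdot X X <= frobdot (X *m A) X.
Proof.
move=> rA; rewrite [frobdot X X]frobdot_rows frobdot_rows mulr_sumr.
by apply: ler_sum => i _; rewrite row_mul; case/andP: (rA (row i X)).
Qed.

(* Polarisation: compare the quadratic form at [b v + v A] and at [b v - v A]. *)
Lemma frobdot_mulmx_rV_le n (A : 'M[R]_n) b (v : 'rV[R]_n) :
  A^T = A -> 0 < b -> numrange_in A (- b) b ->
  frobdot (v *m A) (v *m A) <= b ^+ 2 * frobdot v v.
Proof.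
move=> sA b_gt0 rA; set y := v *m A.
have yAv : frobdot (y *m A) v = frobdot y y.
  by rewrite frobdot_mulmxl sA.
have /andP[_ hi] := rA (b *: v + y); have /andP[lo _] := rA (b *: v - y).
move: hi lo; rewrite /qform !(mulmxDl, mulmxBl) -!scalemxAl -/y mulNmx !frobdotE yAv.
rewrite (frobdotC v y) => hi lo.
have : b * (frobdot y y - b ^+ 2 * frobdot v v) <= 0 by nra.
by rewrite pmulr_rle0 // subr_le0.
Qed.

Lemma frob_mulmx_le m n (X : 'M[R]_(m, n)) (A : 'M[R]_n) b :
  A^T = A -> 0 < b -> numrange_in A (- b) b -> frob (X *m A) <= b * frob X.
Proof.
move=> sA b_gt0 rA.
have sqr_le : frob (X *m A) ^+ 2 <= (b * frob X) ^+ 2.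
  rewrite exprMn !sqr_frob !frobdot_rows mulr_sumr.
  by apply: ler_sum => i _; rewrite row_mul; apply: frobdot_mulmx_rV_le.
by move: sqr_le; rewrite ler_sqr // nnegrE ?frob_ge0 // mulr_ge0 ?frob_ge0 // ltW.
Qed.

Definition sylvester n1 n2 (A1 : 'M[R]_n1) (A2 : 'M[R]_n2) (X : 'M[R]_(n1, n2)) :=
  A1 *m X + X *m A2.

Lemma sylvesterDr n1 n2 (A1 : 'M[R]_n1) (A2 : 'M[R]_n2) (X Y : 'M[R]_(n1, n2)) :
  sylvester A1 A2 (X + Y) = sylvester A1 A2 X + sylvester A1 A2 Y.
Proof. by rewrite /sylvester mulmxDr mulmxDl addrACA. Qed.

Lemma sylvesterBl n1 n2 (A1 C1 : 'M[R]_n1) (A2 C2 : 'M[R]_n2) (X : 'M[R]_(n1, n2)) :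
  sylvester (A1 - C1) (A2 - C2) X = sylvester A1 A2 X - sylvester C1 C2 X.
Proof. by rewrite /sylvester mulmxBl mulmxBr opprD addrACA. Qed.

Lemma frob_sylvester_ge n1 n2 (A1 : 'M[R]_n1) (A2 : 'M[R]_n2) a1 b1 a2 b2
    (X : 'M[R]_(n1, n2)) :
  A1^T = A1 -> numrange_in A1 a1 b1 -> numrange_in A2 a2 b2 ->
  (a1 + a2) * frob X <= frob (sylvester A1 A2 X).
Proof.
move=> sA1 rA1 rA2.
have ge1 : a1 * frobdot X X <= frobdot (A1 *m X) X.
  rewrite -frobdot_tr -[frobdot (A1 *m X) X]frobdot_tr trmx_mul sA1.
  exact: frobdot_mulmx_ge _ rA1.
have sqr_le : (a1 + a2) * frob X * frob X <= frob (sylvester A1 A2 X) * frob X.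
  rewrite -mulrA -expr2 sqr_frob mulrDl; apply: le_trans (frobdot_CauchySchwarz _ _).
  by rewrite frobdotDl lerD // (frobdot_mulmx_ge _ rA2).
have [X0|X_neq0] := eqVneq (frob X) 0; first by rewrite X0 mulr0 frob_ge0.
by rewrite -(ler_pM2r (_ : 0 < frob X)) // lt_def X_neq0 frob_ge0.
Qed.

Lemma frob_sylvester_le n1 n2 (D1 : 'M[R]_n1) (D2 : 'M[R]_n2) b1 b2
    (X : 'M[R]_(n1, n2)) :
  D1^T = D1 -> D2^T = D2 -> 0 < b1 -> 0 < b2 ->
  numrange_in D1 (- b1) b1 -> numrange_in D2 (- b2) b2 ->
  frob (sylvester D1 D2 X) <= (b1 + b2) * frob X.
Proof.
move=> sD1 sD2 b1_gt0 b2_gt0 rD1 rD2; apply: le_trans (ler_frobD _ _) _.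
rewrite mulrDl lerD ?frob_mulmx_le // -frob_tr trmx_mul sD1 -[frob X]frob_tr.
exact: frob_mulmx_le.
Qed.

End NumericalRange.

Lemma sum_if_eq (V : nmodType) (I : eqType) (s : seq I) x (F : I -> V) :
  uniq s -> x \in s -> \sum_(c <- s) (if x == c then F c else 0) = F x.
Proof.
move=> s_uniq x_s; rewrite (bigD1_seq x) //= eqxx big1 ?addr0 // => c.
by rewrite eq_sym => /negPf ->.
Qed.

Section BlockDiagonal.
Variable R : rcfType.

Lemma trmx_bdiag n (lab : nat -> 'I_n -> nat) h (A : 'M[R]_n) :
  (bdiag lab h A)^T = bdiag lab h A^T.
Proof. by apply/matrixP => i j; rewrite !mxE eq_sym. Qed.

(* A vector is the orthogonal sum of its restrictions to the blocks, and the
   quadratic form of [bdiag lab h A] has no cross terms between blocks. *)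
Lemma bdiagB_sym n (lab : nat -> 'I_n -> nat) h k (A : 'M[R]_n) : A^T = A ->
  (bdiag lab h A - bdiag lab k A)^T = bdiag lab h A - bdiag lab k A.
Proof. by move=> sA; rewrite linearB /= !trmx_bdiag sA. Qed.

Lemma numrange_in_bdiag n (lab : nat -> 'I_n -> nat) h (A : 'M[R]_n) a b :
  numrange_in A a b -> numrange_in (bdiag lab h A) a b.
Proof.
move=> rA v; pose s := undup [seq lab h i | i <- enum 'I_n].
have s_uniq : uniq s := undup_uniq _.
have lab_s k : lab h k \in s by rewrite mem_undup map_f ?mem_enum.
pose vc c : 'rV[R]_n := \row_j (if lab h j == c then v 0 j else 0).
have vv : frobdot v v = \sum_(c <- s) frobdot (vc c) (vc c).
  rewrite frobdot_rVE; under [RHS]eq_bigr => c _ do rewrite frobdot_rVE.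
  rewrite exchange_big; apply: eq_bigr => k _ /=.
  rewrite -(sum_if_eq (fun=> v 0 k * v 0 k) s_uniq (lab_s k)).
  by apply: eq_bigr => c _; rewrite !mxE; case: eqP; rewrite ?mul0r.
have qq : qform (bdiag lab h A) v = \sum_(c <- s) qform A (vc c).
  rewrite qformE; under [RHS]eq_bigr => c _ do rewrite qformE.
  rewrite [RHS]exchange_big; apply: eq_bigr => k _ /=.
  rewrite [RHS]exchange_big; apply: eq_bigr => j _ /=.
  pose F c := if lab h j == c then v 0 k * A k j * v 0 j else 0.
  transitivity (F (lab h k)).
    by rewrite /F mxE eq_sym; case: ifP; rewrite ?(mulr0, mul0r).
  rewrite -(sum_if_eq F s_uniq (lab_s k)); apply: eq_bigr => c _; rewrite /F !mxE.
  by case: eqP; case: eqP; rewrite ?(mul0r, mulr0).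
rewrite vv qq !mulr_sumr; apply/andP; split; apply: ler_sum => c _;
  by case/andP: (rA (vc c)).
Qed.

Lemma numrange_in_bdiagB n (lab : nat -> 'I_n -> nat) h k (A : 'M[R]_n) a b :
  0 <= a -> numrange_in A a b ->
  numrange_in (bdiag lab h A - bdiag lab k A) (- b) b.
Proof.
move=> a_ge0 rA; apply: numrange_in_widen
  (numrange_inB (numrange_in_bdiag lab h rA) (numrange_in_bdiag lab k rA)); lra.
Qed.

End BlockDiagonal.

Section RealSymmetric.
Variable R : rcfType.
Local Notation toC := (real_complex R).
Local Open Scope sesquilinear_scope.

Lemma eigenvalue_real_complex n (A : 'M[R]_n) x :
  eigenvalue (map_mx toC A) (toC x) = eigenvalue A x.
Proof. by rewrite !eigenvalue_root_char -map_char_poly fmorph_root. Qed.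

Lemma trmxC_real_complex m n (M : 'M[R]_(m, n)) :
  (map_mx toC M)^t* = map_mx toC M^T.
Proof. by apply/matrixP => i j; rewrite !mxE conj_Creal // complex_real. Qed.

Lemma symmetric_spectral n (A : 'M[R]_n) : A^T = A ->
  exists2 P : 'M[R[i]]_n, P \is unitarymx &
  exists2 d : 'rV[R[i]]_n, map_mx toC A = P^t* *m diag_mx d *m P
    & forall j, exists2 x, eigenvalue A x & d 0 j = toC x.
Proof.
move=> sA; set Ac := map_mx toC A.
have Ac_herm : Ac \is hermsymmx.
  apply: realsym_hermsym; last by apply/mxOverP => i j; rewrite mxE complex_real.
  by apply/is_hermitianmxP; rewrite expr0 scale1r map_mx_id // /Ac map_trmx sA.
set P := spectralmx Ac; set d := spectral_diag Ac.
have P_unitary : P \is unitarymx := spectral_unitarymx Ac.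
have PPt : P *m P^t* = 1%:M by apply/unitarymxP.
have eA : Ac = P^t* *m diag_mx d *m P.
  by have /orthomx_spectralP := hermitian_normalmx Ac_herm; rewrite invmx_unitary.
exists P => //; exists d => // j.
have /complex_realP[x dx] : d 0 j \is Num.real.
  by have /mxOverP := hermitian_spectral_diag_real Ac_herm; apply.
exists x => //; rewrite -eigenvalue_real_complex -/Ac -dx.
apply/eigenvalueP; exists (row j P).
  by rewrite eA !mulmxA -row_mul PPt row1 -rowE row_diag_mx -scalemxAl -rowE.
apply/eqP => Pj0; have := congr1 (row j) PPt.
rewrite row_mul Pj0 mul0mx row1 => /rowP/(_ j); rewrite !mxE !eqxx /=.
by move=> /eqP; rewrite eq_sym oner_eq0.
Qed.

(* Diagonalise [A] by a unitary [P]: with [w := v P^*], both [v A v^T] and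
   [v v^T] become sums over the eigenvalues weighted by [|w_j|^2]. *)
Lemma numrange_in_spectrum n (A : 'M[R]_n) a b :
  A^T = A -> spectrum_in A a b -> numrange_in A a b.
Proof.
move=> sA spA v; have [P P_unitary [d eA eig_d]] := symmetric_spectral sA.
have PtP : P^t* *m P = 1%:M by apply: mulmx1C; apply/unitarymxP.
pose w := map_mx toC v *m P^t*.
have wt : w^t* = P *m (map_mx toC v)^t* by rewrite trmx_mul map_mxM trmxCK.
have toC_frobdot (u u' : 'rV[R]_n) :
    toC (frobdot u u') = (map_mx toC u *m (map_mx toC u')^t*) 0 0.
  by rewrite frobdot_rV trmxC_real_complex -map_mxM [RHS]mxE.
have vAv : toC (qform A v) = (w *m diag_mx d *m w^t*) 0 0.
  by rewrite /qform toC_frobdot map_mxM eA wt /w !mulmxA.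
have vv : toC (frobdot v v) = (w *m w^t*) 0 0.
  by rewrite toC_frobdot wt /w !mulmxA -(mulmxA _ (P^t*)) PtP mulmx1.
have d_bounds j : toC a <= d 0 j <= toC b.
  by have [x /spA x_ab ->] := eig_d j; rewrite !lecR.
rewrite -!lecR !rmorphM /= vAv vv mul_mx_diag !mxE !mulr_sumr.
apply/andP; split; apply: ler_sum => j _; rewrite !mxE mulrAC mulrC;
  have /andP[lo hi] := d_bounds j.
- by apply: ler_wpM2l => //; exact: mul_conjC_ge0.
- by apply: ler_wpM2r => //; exact: mul_conjC_ge0.
Qed.

End RealSymmetric.

Section GeometricGrowth.
Variable R : realFieldType.
Variables (r : nat -> R) (b c e : R) (ell : nat).
Hypotheses (c_ge0 : 0 <= c) (r_ell : r ell <= e * b).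
Hypothesis r_lt : forall j, (j < ell)%N ->
  r j <= c * (b + \sum_(j.+1 <= i < ell.+1) r i).

Lemma geometric_tail_le j : (j <= ell)%N ->
  b + \sum_(j <= i < ell.+1) r i <= (1 + e) * (1 + c) ^+ (ell - j) * b.
Proof.
move=> le_j; rewrite -(subKn le_j).
elim: (ell - j)%N (leq_subr j ell) => [_|d IH lt_d].
  by rewrite subn0 subnn big_nat1 expr0 mulr1 mulrDl mul1r lerD2l.
set j' := (ell - d.+1)%N; have lt_j' : (j' < ell)%N by rewrite /j'; lia.
move: (IH (ltnW lt_d)); rewrite subKn ?(ltnW lt_d) // -(subnSK lt_d) -/j' => IHj'.
rewrite subKn // (big_ltn (leqW lt_j')) addrCA.
have c1_ge0 : 0 <= 1 + c by rewrite addr_ge0.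
have := r_lt lt_j'; have := ler_wpM2l c1_ge0 IHj'.
by rewrite exprS; lra.
Qed.

Lemma geometric_le h : 0 <= b -> e <= c -> (h <= ell)%N ->
  r h <= c * (1 + e) * (1 + c) ^ (ell%:Z - h%:Z - 1) * b.
Proof.
move=> b_ge0 le_ec le_h; have [->|ne_h] := eqVneq h ell.
  rewrite subrr sub0r exprN1; apply: le_trans r_ell _; apply: ler_wpM2r => //.
  by rewrite ler_pdivlMr ?ltr_wpDr //; lra.
have lt_h : (h < ell)%N by rewrite ltn_neqAle ne_h le_h.
have -> : ell%:Z - h%:Z - 1 = (ell - h.+1)%N :> int by lia.
rewrite -exprnP; apply: le_trans (r_lt lt_h) _.
rewrite -!mulrA; apply: ler_wpM2l => //; rewrite !mulrA; exact: geometric_tail_le.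
Qed.

End GeometricGrowth.

Section HierarchicalSylvester.
Variables (R : rcfType) (n1 n2 ell : nat).
Variables (lab1 : nat -> 'I_n1 -> nat) (lab2 : nat -> 'I_n2 -> nat).
Variables (A1 : 'M[R]_n1) (A2 : 'M[R]_n2) (B Xl : 'M[R]_(n1, n2)).
Variable dX : nat -> 'M[R]_(n1, n2).

Local Notation L h := (sylvester (bdiag lab1 h A1) (bdiag lab2 h A2)).
Local Notation X h := (Xtil ell Xl dX h).
Local Notation Xi h := (Xitil lab1 lab2 A1 A2 ell Xl dX h).
Local Notation Res h := (Resid lab1 lab2 A1 A2 B ell Xl dX h).

Lemma Xitil_sylvesterN h : Xi h =
  - sylvester (bdiag lab1 h A1 - bdiag lab1 h.+1 A1)
              (bdiag lab2 h A2 - bdiag lab2 h.+1 A2) (X h.+1).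
Proof. by rewrite /Xitil /sylvester opprD. Qed.

Lemma XitilE h : Xi h = L h.+1 (X h.+1) - L h (X h.+1).
Proof. by rewrite Xitil_sylvesterN sylvesterBl opprB. Qed.

Lemma Xtil_ltn h : (h < ell)%N -> X h = dX h + X h.+1.
Proof. by move=> lt_h; rewrite /Xtil (big_ltn lt_h) addrCA. Qed.

Lemma Resid_ell : Res ell = L ell Xl - B.
Proof. by rewrite /Resid eqxx. Qed.

Lemma Resid_ltn h : (h < ell)%N -> Res h = L h (dX h) - Xi h.
Proof. by move=> lt_h; rewrite /Resid (ltn_eqF lt_h). Qed.

Lemma Xtil_sylvester h : (h <= ell)%N ->
  L h (X h) = B + \sum_(h <= k < ell.+1) Res k.
Proof.
move=> le_h; rewrite -(subKn le_h).
elim: (ell - h)%N (leq_subr h ell) => [_|d IH lt_d].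
  by rewrite subn0 /Xtil big_geq // addr0 big_nat1 Resid_ell addrC subrK.
set h' := (ell - d.+1)%N; have lt_h' : (h' < ell)%N by rewrite /h'; lia.
move: (IH (ltnW lt_d)); rewrite -(subnSK lt_d) -/h' => IHh'.
rewrite (big_ltn (leqW lt_h')) addrCA -IHh' (Resid_ltn lt_h') XitilE.
by rewrite (Xtil_ltn lt_h') sylvesterDr opprB -[RHS]addrA subrK.
Qed.

Variables (alpha1 beta1 alpha2 beta2 eps : R).
Hypotheses (sA1 : A1^T = A1) (sA2 : A2^T = A2).
Hypotheses (alpha1_gt0 : 0 < alpha1) (alpha2_gt0 : 0 < alpha2).
Hypotheses (le_ab1 : alpha1 <= beta1) (le_ab2 : alpha2 <= beta2).
Hypotheses (spA1 : spectrum_in A1 alpha1 beta1)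
           (spA2 : spectrum_in A2 alpha2 beta2).

Local Notation kappa := ((beta1 + beta2) / (alpha1 + alpha2)).

Lemma kappa_ge1 : 1 <= kappa.
Proof. by rewrite ler_pdivlMr ?mul1r ?lerD // addr_gt0. Qed.

Lemma frob_Xitil_le h : frob (Xi h) <= kappa * frob (L h.+1 (X h.+1)).
Proof.
have rA1 := numrange_in_spectrum sA1 spA1.
have rA2 := numrange_in_spectrum sA2 spA2.
have alpha_gt0 : 0 < alpha1 + alpha2 by rewrite addr_gt0.
have beta1_gt0 : 0 < beta1 := lt_le_trans alpha1_gt0 le_ab1.
have beta2_gt0 : 0 < beta2 := lt_le_trans alpha2_gt0 le_ab2.
rewrite Xitil_sylvesterN frobN.
apply: le_trans (frob_sylvester_le _ (bdiagB_sym _ _ _ sA1) (bdiagB_sym _ _ _ sA2)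
    beta1_gt0 beta2_gt0
    (numrange_in_bdiagB lab1 h h.+1 (ltW alpha1_gt0) rA1)
    (numrange_in_bdiagB lab2 h h.+1 (ltW alpha2_gt0) rA2)) _.
rewrite mulrAC ler_pdivlMr // -mulrA; apply: ler_wpM2l.
  by rewrite ltW ?addr_gt0.
rewrite mulrC; apply: frob_sylvester_ge _ (numrange_in_bdiag _ _ rA1)
  (numrange_in_bdiag _ _ rA2).
by rewrite trmx_bdiag sA1.
Qed.

Hypothesis frob_Res_lt :
  forall h, (h < ell)%N -> frob (Res h) <= eps * frob (Xi h).
Hypothesis eps_gt0 : 0 < eps.

Lemma frob_Resid_le h : (h < ell)%N ->
  frob (Res h) <= kappa * eps * (frob B + \sum_(h.+1 <= k < ell.+1) frob (Res k)).
Proof.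
move=> lt_h; apply: le_trans (frob_Res_lt lt_h) _.
rewrite [_ * eps]mulrC -mulrA; apply: ler_wpM2l; first exact: ltW.
apply: le_trans (frob_Xitil_le h) _; apply: ler_wpM2l.
  exact: le_trans ler01 kappa_ge1.
rewrite Xtil_sylvester //; apply: le_trans (ler_frobD _ _) _.
by rewrite lerD2l ler_frob_sum.
Qed.

End HierarchicalSylvester.

Theorem lemma3p1 (R : rcfType) (n1 n2 ell : nat)
    (lab1 : nat -> 'I_n1 -> nat) (lab2 : nat -> 'I_n2 -> nat)
    (A1 : 'M[R]_n1) (A2 : 'M[R]_n2) (B : 'M[R]_(n1, n2))
    (alpha1 beta1 alpha2 beta2 eps : R)
    (Xl : 'M[R]_(n1, n2)) (dX : nat -> 'M[R]_(n1, n2)) :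
  nested_partitions ell lab1 -> nested_partitions ell lab2 ->
  symmetric_mx A1 -> posdef_mx A1 -> symmetric_mx A2 -> posdef_mx A2 ->
  0 < alpha1 -> alpha1 <= beta1 -> 0 < alpha2 -> alpha2 <= beta2 ->
  spectrum_in A1 alpha1 beta1 -> spectrum_in A2 alpha2 beta2 ->
  0 < eps ->
  (beta1 + beta2) / (alpha1 + alpha2) * eps < 1 ->
  frob (Resid lab1 lab2 A1 A2 B ell Xl dX ell) <= eps * frob B ->
  (forall h, (h < ell)%N ->
     frob (Resid lab1 lab2 A1 A2 B ell Xl dX h)
       <= eps * frob (Xitil lab1 lab2 A1 A2 ell Xl dX h)) ->
  forall h, (h <= ell)%N ->
    bdiag lab1 h A1 *m Xtil ell Xl dX h + Xtil ell Xl dX h *m bdiag lab2 h A2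
      = B + \sum_(h <= k < ell.+1) Resid lab1 lab2 A1 A2 B ell Xl dX k
    /\ frob (Resid lab1 lab2 A1 A2 B ell Xl dX h)
       <= (beta1 + beta2) / (alpha1 + alpha2) * eps * (1 + eps)
          * (1 + (beta1 + beta2) / (alpha1 + alpha2) * eps)
              ^ (ell%:Z - h%:Z - 1)
          * frob B.
Proof.
move=> _ _ sA1 _ sA2 _ alpha1_gt0 le_ab1 alpha2_gt0 le_ab2 spA1 spA2 eps_gt0 _
  frob_Res_ell frob_Res_lt h le_h.
split; first exact: Xtil_sylvester.
set kappa := (beta1 + beta2) / (alpha1 + alpha2).
have kappa_ge1 : 1 <= kappa by exact: kappa_ge1.
pose r k := frob (Resid lab1 lab2 A1 A2 B ell Xl dX k).
have r_lt j : (j < ell)%N ->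
    r j <= kappa * eps * (frob B + \sum_(j.+1 <= k < ell.+1) r k).
  by move=> lt_j; apply: frob_Resid_le.
have kappa_eps_ge0 : 0 <= kappa * eps.
  by rewrite mulr_ge0 ?(ltW eps_gt0) ?(le_trans ler01 kappa_ge1).
have le_eps : eps <= kappa * eps by rewrite ler_peMl ?(ltW eps_gt0).
exact: (@geometric_le _ r) _ _ _ _ kappa_eps_ge0 frob_Res_ell r_lt _
  (frob_ge0 B) le_eps le_h.
Qed.
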